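(* Let $\mathcal C$ be a concept hierarchy, $r_1,r_2,\epsilon\in[0,1]$ with $r_1\le r_2(1-\epsilon)$, $m$ a positive integer, and let $\mathcal A_2$ and $\mathcal H$ be the networks defined below (with $\mathcal H$ having a fixed failed set $F$ satisfying the stated constraint). Then $\mathcal H$ $implements_2$ $\mathcal A_2$: for every $B\subseteq C_0$, in the executions of $\mathcal A_2$ and $\mathcal H$ on input $B$, for every concept $c$, if $rep(c)$ does not fire at time $level(c)$ in $\mathcal A_2$, then no neuron in $reps(c)$ fires at time $level(c)$ in $\mathcal H$.
   Context: Concept hierarchies: fix positive integers $\ell_{max},n,k$. A universal set $D$ of concepts is partitioned into disjoint sets $D_0,\dots,D_{\ell_{max}}$ with $|D_0|=n$; $level(c)=\ell$ for $c\in D_\ell$. A concept hierarchy $\mathcal C$ consists of $C\subseteq D$, with $C_\ell=C\cap D_\ell$, and for each $c\in C_\ell$ with $1\le\ell\le\ell_{max}$ a set $children(c)\subseteq C_{\ell-1}$, such that $|C_{\ell_{max}}|=k$, $|children(c)|=k$ for all such $c$, and $children(c)\cap children(c')=\emptyset$ for distinct $c,c'\in C_\ell$. Common network dynamics: neurons partitioned into layers $N_0,\dots,N_{\ell_{max}}$; threshold $\tau$; weights $w(u,v)\in\{0,1\}$ for $u\in N_{\ell-1}$, $v\in N_\ell$. Failed neurons never fire. A non-failed neuron $v\in N_\ell$, $\ell\ge1$, does not fire at time 0 and fires at time $t\ge1$ iff $\sum_{u\in N_{\ell-1}}w(u,v)x_u(t-1)\ge\tau$, where $x_u(s)\in\{0,1\}$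 indicates whether $u$ fires at time $s$. $\mathcal A_2$: no failures; each $c\in D_0$ has $rep(c)\in N_0$, each $c\in C$ with $level(c)\ge1$ has $rep(c)\in N_{level(c)}$, all distinct; $w(u,v)=1$ iff $v=rep(c)$, $u=rep(c')$ for a child $c'$ of $c$, else $0$; $\tau=r_1k$. Input $B\subseteq C_0$: the layer-0 neurons $rep(b)$, $b\in B$, fire at time 0, no other layer-0 neuron fires at time 0, and no layer-0 neuron fires at any other time. $\mathcal H$: each $c\in D_0$ has a set $reps(c)$ of $m$ neurons in $N_0$, each $c\in C$ with $level(c)\ge1$ a set $reps(c)$ of $m$ neurons in $N_{level(c)}$, all pairwise disjoint; $w(u,v)=1$ iff $v\in reps(c)$ and $u\in reps(c')$ for a child $c'$ of $c$, else $0$; $\tau=r_2km(1-\epsilon)$. A fixed set $F$ of neurons is failed, such that for every concept $c$ at least $m(1-\epsilon)$ neurons of $reps(c)$ are not in $F$. Input $B\subseteq C_0$: a layer-0 neuron fires at time 0 iff it is in $\bigcup_{b\in B}reps(b)\setminus F$, and no layer-0 neuron fires at any other time. *)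

From mathcomp Require Import all_boot all_order all_algebra.
Set Implicit Arguments. Unset Strict Implicit. Unset Printing Implicit Defensive.
Import Order.TTheory GRing.Theory Num.Theory.
Local Open Scope ring_scope.

(* The universal set D of concepts is a finType; level c = l means      *)
(* c \in D_l.  C is the set of concepts of the hierarchy, children c    *)
(* its children (only meaningful for c \in C with level c >= 1).        *)
Definition concept_hierarchy (D : finType) (lmax n k : nat)
    (level : D -> nat) (C : {set D}) (children : D -> {set D}) : Prop :=
  [/\ (forall c, (level c <= lmax)%N),
      #|[set c : D | level c == 0%N]| = n,
      #|[set c in C | level c == lmax]| = k,
      (forall c, c \in C -> (1 <= level c)%N ->
         children c \subset [set c' in C | level c' == (level c).-1]
         /\ #|children c| = k) &
      (forall c c', c \in C -> c' \in C -> level c = level c' ->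
         (1 <= level c)%N -> c != c' -> [disjoint children c & children c'])].

Definition has_rep (D : finType) (level : D -> nat) (C : {set D}) (c : D) : bool :=
  (level c == 0%N) || (c \in C).

(* Neurons form a finType N, layer v = l means v \in N_l, weights are   *)
(* boolean (0/1), tau is the threshold, failed the set of failed        *)
(* neurons, input the set of layer-0 neurons firing at time 0.          *)
(* fires ... t v  ==  x_v(t).                                           *)
Fixpoint fires (R : numDomainType) (N : finType) (layer : N -> nat)
    (w : N -> N -> bool) (tau : R) (failed : pred N) (input : pred N)
    (t : nat) (v : N) {struct t} : bool :=
  match t with
  | 0 => [&& layer v == 0%N, ~~ failed v & input v]
  | t'.+1 =>
      [&& layer v != 0%N, ~~ failed v &
        tau <= (\sum_(u : N | (layer u).+1 == layer v)
                  (w u v && fires layer w tau failed input t' u : nat))%:R]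
  end.

From mathcomp Require Import all_boot all_order all_algebra.
From mathcomp Require Import lra.
Set Implicit Arguments. Unset Strict Implicit. Unset Printing Implicit Defensive.
Import Order.TTheory GRing.Theory Num.Theory.
Local Open Scope ring_scope.

(* By induction on the level: if some v in reps c fires in H at time
   level c, then rep c fires in A_2 at that time.  At level 0 this is the
   disjointness of the reps.  At a higher level, every firing input of v
   lies in reps c' for a child c' of c and fires in H, so by induction
   rep c' fires in A_2; so if s children of c fire in A_2, v receives at
   most m s inputs, and crossing H's threshold r2 k m (1 - eps) forces
   s >= r2 (1 - eps) k >= r1 k, A_2's threshold. *)

Lemma sum_nat_of_bool (T : finType) (P b : pred T) :
  (\sum_(u | P u) (b u : nat) = #|[set u | P u && b u]|)%N.
Proof.
rewrite -sum1dep_card big_mkcondr /=.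
by apply: eq_bigr => u _; case: (b u).
Qed.

Lemma card_bigcup_leq (I T : finType) (S : {set I}) (A : I -> {set T}) :
  (#|\bigcup_(i in S) A i| <= \sum_(i in S) #|A i|)%N.
Proof.
elim/big_rec2: _ => [|i n U _ leUn]; first by rewrite cards0.
by rewrite (leq_trans (leq_card_setU _ _)) ?leq_add2l.
Qed.

Section NoFalsePositives.

Variables (R : realFieldType) (D : finType) (level : D -> nat).
Variables (C : {set D}) (children : D -> {set D}).
Hypothesis children_sub : forall c, c \in C -> (1 <= level c)%N ->
  children c \subset [set c' in C | level c' == (level c).-1].

Variables (N1 : finType) (layer1 : N1 -> nat) (w1 : N1 -> N1 -> bool).
Variable rep : D -> N1.
Hypothesis rep_layer : forall c, has_rep level C c -> layer1 (rep c) = level c.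
Hypothesis rep_inj : forall c c', has_rep level C c -> has_rep level C c' ->
  rep c = rep c' -> c = c'.
Hypothesis w1E : forall u v, (layer1 u).+1 = layer1 v ->
  w1 u v = [exists c, exists c', [&& c \in C, (1 <= level c)%N,
                                   c' \in children c, v == rep c & u == rep c']].

Variables (N2 : finType) (layer2 : N2 -> nat) (w2 : N2 -> N2 -> bool).
Variables (reps : D -> {set N2}) (F : {set N2}) (m : nat).
Hypothesis reps_card : forall c, has_rep level C c -> #|reps c| = m.
Hypothesis reps_disj : forall c c', has_rep level C c -> has_rep level C c' ->
  c != c' -> [disjoint reps c & reps c'].
Hypothesis w2E : forall u v, (layer2 u).+1 = layer2 v ->
  w2 u v = [exists c, exists c', [&& c \in C, (1 <= level c)%N,
                                   c' \in children c, v \in reps c & u \in reps c']].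

Variables (B : {set D}) (tau1 tau2 : R).
Hypothesis B_sub : B \subset [set c in C | level c == 0%N].
Hypothesis m_gt0 : (0 < m)%N.
Hypothesis tau_scale : m%:R * tau1 <= tau2.

Local Notation A_fires :=
  (fires layer1 w1 tau1 pred0 (fun u => [exists b in B, u == rep b])).
Local Notation H_fires :=
  (fires layer2 w2 tau2 (mem F) (fun u => u \in (\bigcup_(b in B) reps b) :\: F)).

Lemma mem_reps_inj c c' v : has_rep level C c -> has_rep level C c' ->
  v \in reps c -> v \in reps c' -> c = c'.
Proof.
move=> hc hc' vc vc'; apply/eqP; apply: contraT => neq.
by have := disjointFr (reps_disj hc hc' neq) vc; rewrite vc'.
Qed.

Lemma child_has_rep c c' l : c \in C -> level c = l.+1 -> c' \in children c ->
  has_rep level C c' /\ level c' = l.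
Proof.
move=> cC hl /(subsetP (children_sub cC _)); rewrite hl inE => /(_ isT).
by case/andP=> c'C /eqP->; rewrite /has_rep c'C orbT.
Qed.

Definition firing_children c l := [set c' in children c | A_fires l (rep c')].

Lemma H_fires0_A_fires0 c v : has_rep level C c -> v \in reps c ->
  H_fires 0 v -> A_fires 0 (rep c).
Proof.
move=> hc vc /and3P[_ _]; rewrite !inE => /andP[_ /bigcupP[b bB vb]].
have /(subsetP B_sub) := bB; rewrite inE => /andP[bC /eqP b0].
have eb : b = c by apply: mem_reps_inj _ hc vb vc; rewrite /has_rep bC orbT.
by rewrite /= rep_layer // -eb b0 /=; apply/existsP; exists b; rewrite bB eqxx.
Qed.

Section Step.

Variables (l : nat) (c : D) (v : N2).
Hypotheses (cC : c \in C) (hl : level c = l.+1) (vc : v \in reps c).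
Hypothesis IH : forall c', has_rep level C c' -> level c' = l ->
  forall u, u \in reps c' -> H_fires l u -> A_fires l (rep c').

Let hc : has_rep level C c. Proof. by rewrite /has_rep cC orbT. Qed.

Lemma H_input_le :
  (\sum_(u | (layer2 u).+1 == layer2 v) (w2 u v && H_fires l u : nat)
    <= m * #|firing_children c l|)%N.
Proof.
have -> : (m * #|firing_children c l| =
           \sum_(c' in firing_children c l) #|reps c'|)%N.
  rewrite mulnC -sum_nat_const; apply: eq_bigr => c'; rewrite inE.
  by case/andP=> /(child_has_rep cC hl) [hc' _] _; rewrite reps_card.
rewrite sum_nat_of_bool; apply: leq_trans (card_bigcup_leq _ _).
apply/subset_leq_card/subsetP => u; rewrite inE => /and3P[/eqP luv].
rewrite w2E // => /existsP[c1 /existsP[c' /and5P[c1C _ c'c vc1 uc']]] ufires.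
have ec : c1 = c by apply: mem_reps_inj _ hc vc1 vc; rewrite /has_rep c1C orbT.
subst c1; have [hc' hl'] := child_has_rep cC hl c'c.
by apply/bigcupP; exists c' => //; rewrite inE c'c (IH hc' hl' uc' ufires).
Qed.

Lemma A_input_ge :
  (#|firing_children c l|
    <= \sum_(u | (layer1 u).+1 == layer1 (rep c)) (w1 u (rep c) && A_fires l u : nat))%N.
Proof.
have rep_inj_children : {in firing_children c l &, injective rep}.
  move=> c1 c2; rewrite !inE => /andP[/(child_has_rep cC hl)[h1 _] _].
  by case/andP=> /(child_has_rep cC hl)[h2 _] _; apply: rep_inj.
rewrite sum_nat_of_bool -(card_in_imset rep_inj_children).
apply/subset_leq_card/subsetP => _ /imsetP[c' /[!inE] /andP[c'c c'fires] ->].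
have [hc' hl'] := child_has_rep cC hl c'c.
rewrite c'fires andbT !rep_layer // hl' hl eqxx /= w1E; last first.
  by rewrite !rep_layer // hl' hl.
by apply/existsP; exists c; apply/existsP; exists c'; rewrite cC hl c'c !eqxx.
Qed.

Lemma H_firesS_A_firesS : H_fires l.+1 v -> A_fires l.+1 (rep c).
Proof.
move=> /and3P[_ _ le_tau2]; rewrite /= rep_layer // hl /=.
have le_tau1 : tau1 <= #|firing_children c l|%:R.
  rewrite -(ler_pM2l (_ : 0 < m%:R)) ?ltr0n // -natrM.
  by apply: le_trans tau_scale (le_trans le_tau2 _); rewrite ler_nat H_input_le.
by apply: le_trans le_tau1 _; rewrite ler_nat -hl -(rep_layer hc) A_input_ge.
Qed.

End Step.

Lemma H_fires_A_fires l c v : has_rep level C c -> level c = l ->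
  v \in reps c -> H_fires l v -> A_fires l (rep c).
Proof.
elim: l c v => [|l IH] c v hc hl vc; first exact: H_fires0_A_fires0.
have cC : c \in C by move: hc; rewrite /has_rep hl.
exact: H_firesS_A_firesS cC hl vc (fun c' hc' hl' u => IH c' u hc' hl').
Qed.

End NoFalsePositives.

Theorem theorem7p3
  (R : realFieldType)
  (* the concept hierarchy *)
  (lmax n k : nat) (hlmax : (0 < lmax)%N) (hn : (0 < n)%N) (hk : (0 < k)%N)
  (D : finType) (level : D -> nat) (C : {set D}) (children : D -> {set D})
  (hC : concept_hierarchy lmax n k level C children)
  (* parameters *)
  (r1 r2 eps : R)
  (hr1 : 0 <= r1 <= 1) (hr2 : 0 <= r2 <= 1) (heps : 0 <= eps <= 1)
  (hr12 : r1 <= r2 * (1 - eps))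
  (m : nat) (hm : (0 < m)%N)
  (* the network A_2 *)
  (N1 : finType) (layer1 : N1 -> nat) (w1 : N1 -> N1 -> bool) (rep : D -> N1)
  (hlayer1 : forall v, (layer1 v <= lmax)%N)
  (hrep_layer : forall c, has_rep level C c -> layer1 (rep c) = level c)
  (hrep_inj : forall c c', has_rep level C c -> has_rep level C c' ->
       rep c = rep c' -> c = c')
  (hw1 : forall u v, (layer1 u).+1 = layer1 v ->
       w1 u v = [exists c, exists c',
                   [&& c \in C, (1 <= level c)%N, c' \in children c,
                       v == rep c & u == rep c']])
  (* the network H *)
  (N2 : finType) (layer2 : N2 -> nat) (w2 : N2 -> N2 -> bool)
  (reps : D -> {set N2}) (F : {set N2})
  (hlayer2 : forall v, (layer2 v <= lmax)%N)
  (hreps_card : forall c, has_rep level C c -> #|reps c| = m)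
  (hreps_layer : forall c, has_rep level C c ->
       forall v, v \in reps c -> layer2 v = level c)
  (hreps_disj : forall c c', has_rep level C c -> has_rep level C c' ->
       c != c' -> [disjoint reps c & reps c'])
  (hw2 : forall u v, (layer2 u).+1 = layer2 v ->
       w2 u v = [exists c, exists c',
                   [&& c \in C, (1 <= level c)%N, c' \in children c,
                       v \in reps c & u \in reps c']])
  (hF : forall c, has_rep level C c ->
       m%:R * (1 - eps) <= #|reps c :\: F|%:R) :
  forall B : {set D}, B \subset [set c in C | level c == 0%N] ->
  forall c, has_rep level C c ->
    ~~ fires layer1 w1 (r1 * k%:R) pred0
         (fun u => [exists b in B, u == rep b]) (level c) (rep c) ->
    forall v, v \in reps c ->
      ~~ fires layer2 w2 (r2 * k%:R * m%:R * (1 - eps)) (mem F)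
           (fun u => u \in (\bigcup_(b in B) reps b) :\: F) (level c) v.
Proof.
move=> B hB c hc A_silent v vc; apply: contra A_silent.
have [_ _ _ hchildren _] := hC.
have children_sub c0 : c0 \in C -> (1 <= level c0)%N ->
    children c0 \subset [set c' in C | level c' == (level c0).-1].
  by move=> c0C /(hchildren _ c0C)[].
have tau_scale : m%:R * (r1 * k%:R) <= r2 * k%:R * m%:R * (1 - eps).
  have mk_ge0 : 0 <= (m * k)%:R :> R by [].
  rewrite natrM in mk_ge0; nra.
exact: (H_fires_A_fires children_sub hrep_layer hrep_inj hw1 hreps_card
          hreps_disj hw2 hB hm tau_scale hc erefl vc).
Qed.
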